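(* Let $K$ be a division ring. Then $K[G]$ is directly finite for every group $G$ if and only if for every $\mathrm{ULIE}_K$ group $\Gamma$, the group ring $K[\Gamma]$ is directly finite.
   Context: $K$ is a nonzero division ring; $K[G]$ is the group ring. A ring is directly finite if $xy=1$ implies $yx=1$. For integers $m,n\ge2$ let $S_{m,n}=\{0,\dots,m-1\}\times\{0,\dots,n-1\}$; for a partition $\pi$ of $S_{m,n}$ write $(i,j)\sim_\pi(i',j')$ if the two pairs lie in the same block. $\Gamma_\pi$ is the group with generators $a_0,\dots,a_{m-1},b_0,\dots,b_{n-1}$ and relations $a_0=b_0=1$ and $a_ib_j=a_{i'}b_{j'}$ whenever $(i,j)\sim_\pi(i',j')$. $\pi$ is nondegenerate if in $\Gamma_\pi$ the $a_i$ are pairwise distinct and the $b_j$ are pairwise distinct. Given nonzero $r_0,\dots,r_{m-1},s_0,\dots,s_{n-1}\in K$, $\pi$ is realizable with them if for every block $E$, $\sum_{(i,j)\in E}r_is_j$ equals $1$ if $(0,0)\in E$ and $0$ otherwise. With partitions ordered by refinement, $\pi$ is minimally realizable over $K$ if for some choice of nonzero $r_i,s_j\in K$ it is minimal among the partitions of $S_{m,n}$ realizable with those elements. An $\mathrm{ULIE}_K$ group is a group $\Gamma_\pi$ for some $m,n\ge2$ and some nondegenerate partition $\pi$ of $S_{m,n}$ minimally realizable over $K$. *)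

From HB Require Import structures.
From mathcomp Require Import all_boot all_order all_algebra.
From mathcomp Require Import monoid.

Set Implicit Arguments.
Unset Strict Implicit.
Unset Printing Implicit Defensive.

Import GRing.Theory.

(** K is a (nonzero) division ring: a unit ring (1 != 0 is built into
    unitRingType) in which every nonzero element is invertible. *)
Definition is_divring (K : unitRingType) : Prop :=
  forall x : K, x != 0%R -> x \is a GRing.unit.

(** ** The group ring K[G]
    An element of K[G] is a finitely supported function G -> K; [s] is a
    finite list containing its support. *)
Section GroupRing.
Variables (K : unitRingType) (G : groupType).

Definition supported_in (f : G -> K) (s : seq G) : Prop :=
  forall x, f x != 0%R -> x \in s.

(** Product in K[G]: (f * g)(h) = sum_{a in G} f(a) g(a^-1 h); since f
    vanishes outside s, it suffices to sum over the support list s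
    (without repetitions). *)
Definition gr_mul (s : seq G) (f g : G -> K) : G -> K :=
  fun h => (\sum_(a <- undup s) f a * g ((a^-1) * h)%g)%R.

Definition gr_one : G -> K := fun h => if h == 1%g then 1%R else 0%R.

Definition group_ring_directly_finite : Prop :=
  forall (f g : G -> K) (s t : seq G),
    supported_in f s -> supported_in g t ->
    gr_mul s f g =1 gr_one -> gr_mul t g f =1 gr_one.
End GroupRing.

Section Partitions.
Variables (m n : nat).
Notation S := ('I_m * 'I_n)%type.

Definition is_partition (P : {set {set S}}) : bool := partition P [set: S].

Definition same_block (P : {set {set S}}) (x y : S) : bool :=
  pblock P x == pblock P y.

Definition refines (Q P : {set {set S}}) : Prop :=
  forall E, E \in Q -> exists2 F, F \in P & E \subset F.

Definition is00 (x : S) : bool := (nat_of_ord x.1 == 0) && (nat_of_ord x.2 == 0).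

Section Realize.
Variable K : unitRingType.

Definition realizable_with (r : 'I_m -> K) (s : 'I_n -> K)
    (P : {set {set S}}) : Prop :=
  is_partition P /\
  forall E, E \in P ->
    (\sum_(x in E) r x.1 * s x.2)%R =
      (if [exists x in E, is00 x] then 1%R else 0%R).

Definition minimally_realizable (P : {set {set S}}) : Prop :=
  exists (r : 'I_m -> K) (s : 'I_n -> K),
    (forall i, r i != 0%R) /\ (forall j, s j != 0%R) /\
    realizable_with r s P /\
    (forall Q, realizable_with r s Q -> refines Q P -> Q = P).
End Realize.

Definition relations_hold (P : {set {set S}}) (H : groupType)
    (a : 'I_m -> H) (b : 'I_n -> H) : Prop :=
  (forall i : 'I_m, nat_of_ord i = 0 -> a i = 1%g) /\
  (forall j : 'I_n, nat_of_ord j = 0 -> b j = 1%g) /\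
  (forall x y : S, same_block P x y -> (a x.1 * b x.2 = a y.1 * b y.2)%g).

Definition is_group_hom (H1 H2 : groupType) (phi : H1 -> H2) : Prop :=
  forall x y, phi (x * y)%g = (phi x * phi y)%g.

(** (Gamma, a, b) is (isomorphic to) the group Gamma_P with the
    presentation <a_i, b_j | relations>, i.e. it satisfies the universal
    property of that presentation. *)
Definition presents (P : {set {set S}}) (Gamma : groupType)
    (a : 'I_m -> Gamma) (b : 'I_n -> Gamma) : Prop :=
  relations_hold P a b /\
  forall (H : groupType) (a' : 'I_m -> H) (b' : 'I_n -> H),
    relations_hold P a' b' ->
    (exists phi : Gamma -> H, is_group_hom phi /\
        (forall i, phi (a i) = a' i) /\ (forall j, phi (b j) = b' j)) /\
    (forall phi psi : Gamma -> H, is_group_hom phi -> is_group_hom psi ->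
        (forall i, phi (a i) = psi (a i)) -> (forall j, phi (b j) = psi (b j)) ->
        phi =1 psi).
End Partitions.

Definition ULIE_group (K : unitRingType) (Gamma : groupType) : Prop :=
  exists (m n : nat) (P : {set {set ('I_m * 'I_n)}})
         (a : 'I_m -> Gamma) (b : 'I_n -> Gamma),
    (2 <= m)%N /\ (2 <= n)%N /\ is_partition P /\ presents P a b /\
    injective a /\ injective b /\
    minimally_realizable K P.

From HB Require Import structures.
From mathcomp Require Import all_boot all_order all_algebra.
From mathcomp Require Import monoid perm.
From mathcomp.classical Require Import boolp.

Set Implicit Arguments.
Unset Strict Implicit.
Unset Printing Implicit Defensive.

Import GRing.Theory.

(* Let x = sum_i r_i g_i and y = sum_j s_j h_j in K[G] with xy = 1, both
   supports listed without repetition and all coefficients nonzero.  Some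
   g_i h_j equals 1; reindex so that it is g_0 h_0.  If a support is a single
   point, every product g_i h_j is 1 and yx = 1 reduces to rs = 1 in K.
   Otherwise the partition of pairs (i, j) by the value of g_i h_j is
   realizable with the coefficients, and a minimal realizable refinement pi
   yields a ULIE group Gamma_pi, which is nondegenerate because
   a_i |-> h_0 g_i, b_j |-> h_j g_0 defines a homomorphism Gamma_pi -> G.
   In K[Gamma_pi] the lifts X = sum_i r_i a_i, Y = sum_j s_j b_j satisfy
   XY = 1, hence YX = 1, and the homomorphism maps b_j a_i to h_j g_i, so
   yx = 1. *)

Section GroupHom.
Local Open Scope group_scope.
Variables (H1 H2 : groupType) (phi : H1 -> H2).
Hypothesis hom_phi : is_group_hom phi.

Lemma group_hom1 : phi 1 = 1.
Proof. by apply: (@mulgI _ (phi 1)); rewrite -hom_phi !mulg1. Qed.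

Lemma group_homV x : phi x^-1 = (phi x)^-1.
Proof. by apply: (@mulIg _ (phi x)); rewrite -hom_phi !mulVg group_hom1. Qed.

End GroupHom.

Section Words.
Local Open Scope group_scope.
Variable X : choiceType.

Definition word := seq (bool * X).

Definition weval (H : groupType) (v : X -> H) (w : word) : H :=
  foldr (fun u acc => (if u.1 then (v u.2)^-1 else v u.2) * acc) 1 w.

Definition winv (w : word) : word := rev (map (fun u => (~~ u.1, u.2)) w).

Variable (H : groupType).
Implicit Type v : X -> H.

Lemma weval_cat v w1 w2 : weval v (w1 ++ w2) = weval v w1 * weval v w2.
Proof. by elim: w1 => [|u w IH] /=; rewrite ?mul1g // IH mulgA. Qed.

Lemma weval_inv v w : weval v (winv w) = (weval v w)^-1.
Proof.
elim: w => [|[b x] w IH] /=; first by rewrite invg1.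
rewrite /winv /= rev_cons -cats1 weval_cat -/(winv w) IH /= mulg1 invgM.
by case: b => //=; rewrite invgK.
Qed.

Lemma weval1 v x : weval v [:: (false, x)] = v x.
Proof. exact: mulg1. Qed.

Lemma eq_weval v v' w : v =1 v' -> weval v w = weval v' w.
Proof. by move=> e; elim: w => //= u w ->; rewrite e. Qed.

Lemma weval_hom (H' : groupType) (phi : H -> H') v w :
  is_group_hom phi -> phi (weval v w) = weval (phi \o v) w.
Proof.
move=> hom_phi; elim: w => [|[[] x] w IH] /=; first exact: group_hom1.
  by rewrite hom_phi IH group_homV.
by rewrite hom_phi IH.
Qed.

End Words.

(* The group <X | R> is realised on canonical representatives of the classes
   of words that evaluate equally in every group satisfying R. *)
Section Presentation.
Local Open Scope group_scope.
Variables (X : choiceType) (R : word X -> word X -> Prop).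

Definition satisfies (H : groupType) (v : X -> H) : Prop :=
  forall w1 w2, R w1 w2 -> weval v w1 = weval v w2.

Definition weq (w1 w2 : word X) : Prop :=
  forall (H : groupType) (v : X -> H), satisfies v -> weval v w1 = weval v w2.

Lemma canon_ex w : exists w', `[< weq w w' >].
Proof. by exists w; apply/asboolP. Qed.

Definition canon w := xchoose (canon_ex w).

Lemma canonP w : weq w (canon w).
Proof. exact/asboolP/(xchooseP (canon_ex w)). Qed.

Lemma canon_eq w1 w2 : weq w1 w2 -> canon w1 = canon w2.
Proof.
move=> e; apply: eq_xchoose => w; apply/asboolP/asboolP => h H v hv.
  by rewrite -(h H v hv) (e H v hv).
by rewrite (e H v hv) (h H v hv).
Qed.

Lemma canonK w : canon (canon w) = canon w.
Proof. by apply: canon_eq => H v hv; rewrite -canonP. Qed.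

Definition pres_group := {w : word X | canon w == w}.

HB.instance Definition _ := Choice.on pres_group.

Definition cls (w : word X) : pres_group := exist _ (canon w) (introT eqP (canonK w)).

Lemma clsE w1 w2 : weq w1 w2 -> cls w1 = cls w2.
Proof. by move=> e; apply: val_inj; rewrite /= (canon_eq e). Qed.

Lemma weval_cls (H : groupType) (v : X -> H) w :
  satisfies v -> weval v (val (cls w)) = weval v w.
Proof. by move=> hv; rewrite /= -canonP. Qed.

Lemma cls_val (x : pres_group) : cls (val x) = x.
Proof. by apply: val_inj => /=; case: x => w /= /eqP. Qed.

Definition pres_mul (x y : pres_group) := cls (val x ++ val y).
Definition pres_one := cls [::].
Definition pres_inv (x : pres_group) := cls (winv (val x)).

Lemma pres_mulA : associative pres_mul.
Proof.
move=> x y z; apply: clsE => H v hv.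
by rewrite !weval_cat !weval_cls // !weval_cat mulgA.
Qed.

Lemma pres_mul1 : left_id pres_one pres_mul.
Proof.
move=> x; rewrite /pres_mul -[RHS]cls_val; apply: clsE => H v hv.
by rewrite weval_cat weval_cls //= mul1g.
Qed.

Lemma pres_mulg1 : right_id pres_one pres_mul.
Proof.
move=> x; rewrite /pres_mul -[RHS]cls_val; apply: clsE => H v hv.
by rewrite weval_cat weval_cls //= mulg1.
Qed.

Lemma pres_mulV : left_inverse pres_one pres_inv pres_mul.
Proof.
move=> x; apply: clsE => H v hv.
by rewrite weval_cat weval_cls // weval_inv mulVg.
Qed.

Lemma pres_mulgV : right_inverse pres_one pres_inv pres_mul.
Proof.
move=> x; apply: clsE => H v hv.
by rewrite weval_cat weval_cls // weval_inv mulgV.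
Qed.

HB.instance Definition _ :=
  isGroup.Build pres_group pres_mulA pres_mul1 pres_mulg1 pres_mulV pres_mulgV.

Definition pres_gen (x : X) : pres_group := cls [:: (false, x)].

Lemma weval_pres_gen w : weval pres_gen w = cls w.
Proof.
elim: w => [|[b x] w IH] /=; first by [].
rewrite IH; apply: clsE => H v hv; rewrite weval_cat !weval_cls //.
by case: b; rewrite /= ?weval_cls ?weval_inv ?weval_cls //= !mulg1.
Qed.

Lemma pres_gen_satisfies : satisfies pres_gen.
Proof.
by move=> w1 w2 hR; rewrite !weval_pres_gen; apply: clsE => H v hv; apply: hv.
Qed.

Lemma pres_lift (H : groupType) (v : X -> H) : satisfies v ->
  exists2 phi : pres_group -> H, is_group_hom phi & phi \o pres_gen =1 v.
Proof.
move=> hv; exists (fun x => weval v (val x)) => [x y|x] /=.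
  by rewrite weval_cls // weval_cat.
by rewrite weval_cls // weval1.
Qed.

Lemma pres_hom_eq (H : groupType) (phi psi : pres_group -> H) :
  is_group_hom phi -> is_group_hom psi -> phi \o pres_gen =1 psi \o pres_gen ->
  phi =1 psi.
Proof.
move=> hphi hpsi e x; rewrite -(cls_val x) -weval_pres_gen.
by rewrite !weval_hom //; apply: eq_weval.
Qed.

End Presentation.

Section GammaPresentation.
Local Open Scope group_scope.
Variables (m n : nat) (P : {set {set ('I_m * 'I_n)}}).

Definition ab_word (x : 'I_m * 'I_n) : word ('I_m + 'I_n)%type :=
  [:: (false, inl x.1); (false, inr x.2)].

Definition gamma_rels (w1 w2 : word ('I_m + 'I_n)%type) : Prop :=
  [\/ exists2 i : 'I_m, i = 0%N :> nat & (w1, w2) = ([:: (false, inl i)], [::]),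
      exists2 j : 'I_n, j = 0%N :> nat & (w1, w2) = ([:: (false, inr j)], [::]) |
      exists2 p, same_block P p.1 p.2 & (w1, w2) = (ab_word p.1, ab_word p.2)].

Lemma satisfies_gamma_rels (H : groupType) (v : ('I_m + 'I_n)%type -> H) :
  satisfies gamma_rels v <-> relations_hold P (v \o inl) (v \o inr).
Proof.
split=> [hv | [ha [hb hab]] w1 w2].
  split; [move=> i i0 | split; [move=> j j0 | move=> x y xy]].
  - by rewrite /= -weval1; apply: (hv _ [::]); constructor 1; exists i.
  - by rewrite /= -weval1; apply: (hv _ [::]); constructor 2; exists j.
  - have := hv (ab_word x) (ab_word y); rewrite /= !mulg1; apply.
    by constructor 3; exists (x, y).
case=> [[i i0 [-> ->]] | [j j0 [-> ->]] | [p xy [-> ->]]] /=.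
- by rewrite mulg1 [v _]ha.
- by rewrite mulg1 [v _]hb.
- by rewrite !mulg1; apply: hab.
Qed.

Definition gamma := pres_group gamma_rels.
Definition gamma_a (i : 'I_m) : gamma := pres_gen gamma_rels (inl i).
Definition gamma_b (j : 'I_n) : gamma := pres_gen gamma_rels (inr j).

Lemma gamma_presents : presents P gamma_a gamma_b.
Proof.
split; first exact/satisfies_gamma_rels/pres_gen_satisfies.
move=> H a b hab; split.
  pose v x := match x with inl i => a i | inr j => b j end.
  have [phi hom_phi phiE] := pres_lift (proj2 (satisfies_gamma_rels v) hab).
  exists phi; split=> //.
  by split=> [i|j]; [exact: (phiE (inl i)) | exact: (phiE (inr j))].
move=> phi psi hphi hpsi ea eb.
by apply: pres_hom_eq => // -[i|j] /=; [exact: ea | exact: eb].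
Qed.

End GammaPresentation.

Section FibreSums.
Local Open Scope ring_scope.
Variable K : unitRingType.

Lemma sum_seq_pick (T : eqType) (s : seq T) (x : T) (F : T -> K) : uniq s ->
  \sum_(a <- s) (if a == x then F a else 0) = if x \in s then F x else 0.
Proof.
move=> us; case: ifP => xs.
  by rewrite (bigD1_seq x) //= eqxx big1 ?addr0 // => a /negbTE ->.
by rewrite big1_seq // => a /andP[_ aS]; case: eqP => // ax; rewrite -ax aS in xs.
Qed.

(* fibre_sum c F is the element sum_p F p c p of K[G], and conv r g s h the
   product (sum_i r_i g_i) (sum_j s_j h_j). *)
Definition fibre_sum (I : finType) (T : eqType) (c : I -> T) (F : I -> K) (z : T) :=
  \sum_p if c p == z then F p else 0.

Lemma fibre_sum_inj (I : finType) (T : eqType) (c : I -> T) (F : I -> K) p :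
  injective c -> fibre_sum c F (c p) = F p.
Proof.
move=> inj_c; rewrite /fibre_sum (bigD1 p) //= eqxx big1 ?addr0 // => q qp.
by case: eqP => // /inj_c eq_qp; rewrite eq_qp eqxx in qp.
Qed.

Lemma fibre_sum_comp (I : finType) (T U : eqType) (c : I -> T) (phi : T -> U) F z :
  fibre_sum (phi \o c) F z =
  \sum_(w <- undup (map c (enum I))) if phi w == z then fibre_sum c F w else 0.
Proof.
set L := undup _; have cL p : c p \in L by rewrite mem_undup map_f ?mem_enum.
transitivity (\sum_p \sum_(w <- L) if w == c p then
                                     (if phi w == z then F p else 0) else 0).
  by apply: eq_bigr => p _; rewrite sum_seq_pick ?undup_uniq // cL.
rewrite exchange_big; apply: eq_bigr => w _ /=; case: ifP => phi_w.
  by apply: eq_bigr => p _; rewrite eq_sym; case: eqP => // ->; rewrite phi_w.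
by rewrite big1 // => p _; case: eqP => // ->; rewrite phi_w.
Qed.

Lemma fibre_sum_hom_one (I : finType) (G H : groupType) (c : I -> G)
    (phi : G -> H) (F : I -> K) :
  phi 1%g = 1%g -> fibre_sum c F =1 @gr_one K _ ->
  fibre_sum (phi \o c) F =1 @gr_one K _.
Proof.
move=> phi1 cF z; rewrite fibre_sum_comp; set L := undup _.
have oneL : 1%g \in L.
  apply: contraT => one_notin; have := cF 1%g.
  rewrite /gr_one eqxx /fibre_sum big1 => [/eqP|p _]; first by rewrite eq_sym oner_eq0.
  by case: eqP => // cp1; rewrite -cp1 mem_undup map_f ?mem_enum in one_notin.
transitivity (\sum_(w <- L) if w == 1%g then (if phi w == z then 1 else 0) else 0 : K).
  by apply: eq_bigr => w _; rewrite cF /gr_one; case: (w == 1%g); case: (phi w == z).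
by rewrite sum_seq_pick ?undup_uniq // oneL phi1 /gr_one eq_sym.
Qed.

Definition conv (G : groupType) (I J : finType)
    (r : I -> K) (g : I -> G) (s : J -> K) (h : J -> G) : G -> K :=
  fibre_sum (fun p : I * J => (g p.1 * h p.2)%g) (fun p => r p.1 * s p.2).

Lemma conv_pair (G : groupType) (I J : finType) r (g : I -> G) s (h : J -> G) z :
  conv r g s h z = \sum_i \sum_j if (g i * h j)%g == z then r i * s j else 0.
Proof.
by rewrite (pair_bigA _ (fun i j => if (g i * h j)%g == z then r i * s j else 0)).
Qed.

Lemma eq_gr_mul (G : groupType) (L : seq G) (f f' e e' : G -> K) :
  f =1 f' -> e =1 e' -> gr_mul L f e =1 gr_mul L f' e'.
Proof. by move=> ff' ee' z; apply: eq_bigr => a _; rewrite ff' ee'. Qed.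

Lemma gr_mul_fibre_sum (G : groupType) (I J : finType) r (g : I -> G) s
    (h : J -> G) (L : seq G) z :
  (forall i, r i != 0 -> g i \in L) ->
  gr_mul L (fibre_sum g r) (fibre_sum h s) z = conv r g s h z.
Proof.
move=> gL; rewrite conv_pair /gr_mul.
under eq_bigr do rewrite /fibre_sum mulr_suml.
rewrite exchange_big /=; apply: eq_bigr => i _.
transitivity (\sum_(a <- undup L)
  if a == g i then r i * fibre_sum h s ((g i)^-1 * z)%g else 0).
  by apply: eq_bigr => a _; rewrite eq_sym; case: eqP => [->|_]; rewrite ?mul0r.
rewrite sum_seq_pick ?undup_uniq // mem_undup; case: ifP => giL.
  rewrite /fibre_sum mulr_sumr; apply: eq_bigr => j _.
  rewrite -(inj_eq (@mulgI _ (g i))) mulVKg.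
  by case: ifP; rewrite ?mulr0.
have -> : r i = 0 by apply: contraFeq giL; apply: gL.
by rewrite big1 // => j _; rewrite mul0r if_same.
Qed.

Lemma fibre_sum_supported (I : finType) (G : groupType) (g : I -> G) r :
  supported_in (fibre_sum g r) (map g (enum I)).
Proof.
move=> x; apply: contraR => xg; rewrite /fibre_sum big1 // => i _.
by case: eqP => // gix; rewrite -gix map_f ?mem_enum in xg.
Qed.

Lemma supported_fibre_sumP (G : groupType) (f : G -> K) (L : seq G) :
  supported_in f L -> exists k (r : 'I_k -> K) (g : 'I_k -> G),
    [/\ injective g, forall i, r i != 0, forall i, g i \in L & f =1 fibre_sum g r].
Proof.
move=> fL; pose sf := [seq x <- undup L | f x != 0].
have uniq_sf : uniq sf by rewrite filter_uniq ?undup_uniq.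
pose g (i : 'I_(size sf)) := nth 1%g sf i.
have g_sf i : g i \in sf by rewrite mem_nth.
have inj_g : injective g.
  by move=> i j /eqP; rewrite nth_uniq // => /eqP/val_inj.
exists (size sf), (f \o g), g; split=> // [i|i|x].
- by have := g_sf i; rewrite mem_filter => /andP[].
- by have := g_sf i; rewrite mem_filter mem_undup => /andP[].
have [x_sf|x_sf] := boolP (x \in sf).
  have x_lt : (index x sf < size sf)%N by rewrite index_mem.
  have gx : g (Ordinal x_lt) = x by rewrite /g nth_index.
  by rewrite -gx fibre_sum_inj.
rewrite /fibre_sum big1 => [|i _]; last first.
  by case: eqP => // gix; rewrite -gix g_sf in x_sf.
apply/eqP; apply: contraR x_sf => fx; rewrite mem_filter fx mem_undup /=.
exact: fL.
Qed.

Lemma conv_perm (G : groupType) (I J : finType) r (g : I -> G) s (h : J -> G)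
    (si : {perm I}) (ta : {perm J}) :
  conv (r \o si) (g \o si) (s \o ta) (h \o ta) =1 conv r g s h.
Proof.
move=> z; rewrite /conv /fibre_sum.
rewrite [RHS](reindex_inj (h := fun p : I * J => (si p.1, ta p.2))) //.
by move=> [x1 x2] [y1 y2] /= [/perm_inj -> /perm_inj ->].
Qed.

End FibreSums.

Section DivisionRing.
Local Open Scope ring_scope.
Variable K : unitRingType.
Hypothesis divK : is_divring K.

Lemma divring_mulf_neq0 (x y : K) : x != 0 -> y != 0 -> x * y != 0.
Proof.
move=> x0 y0; apply: contra y0 => /eqP xy0.
by rewrite -(mulKr (divK x0) y) xy0 mulr0.
Qed.

Lemma divring_mul_eq1C (x y : K) : x * y = 1 -> y * x = 1.
Proof.
move=> xy1; have x0 : x != 0.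
  by apply: contra_eq_neq xy1 => ->; rewrite mul0r eq_sym oner_neq0.
by rewrite -(mulKr (divK x0) y) xy1 mulr1 mulVr ?divK.
Qed.

Variables (G : groupType) (I J : finType).
Variables (r : I -> K) (g : I -> G) (s : J -> K) (h : J -> G).
Hypotheses (r_neq0 : forall i, r i != 0) (s_neq0 : forall j, s j != 0).
Hypothesis conv_one : conv r g s h =1 @gr_one K G.

Lemma conv_one_unique_product i j :
  (forall p, (g p.1 * h p.2 = g i * h j)%g -> p = (i, j)) -> (g i * h j = 1)%g.
Proof.
move=> uniq_ij; have := conv_one (g i * h j)%g.
rewrite /conv /fibre_sum (bigD1 (i, j)) //= eqxx big1 ?addr0 => [|p p_ij]; last first.
  by case: eqP => // /uniq_ij p_eq; rewrite p_eq eqxx in p_ij.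
rewrite /gr_one; case: eqP => // _ /eqP.
by rewrite (negbTE (divring_mulf_neq0 (r_neq0 i) (s_neq0 j))).
Qed.

Lemma conv_one_trivial_products :
  (forall i j, g i * h j = 1)%g -> conv s h r g =1 @gr_one K G.
Proof.
move=> gh1; have hg1 i j : (h j * g i = 1)%g by rewrite -(mulg1_eq (gh1 i j)) mulVg.
have sum_rs : (\sum_i r i) * (\sum_j s j) = 1.
  have := conv_one 1%g; rewrite conv_pair /gr_one eqxx => <-.
  rewrite big_distrlr; apply: eq_bigr => i _.
  by apply: eq_bigr => j _; rewrite gh1 eqxx.
move=> z; rewrite conv_pair /gr_one; have [->|z1] := eqVneq z 1%g.
  rewrite -(divring_mul_eq1C sum_rs) big_distrlr; apply: eq_bigr => j _.
  by apply: eq_bigr => i _; rewrite hg1 eqxx.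
by rewrite big1 // => j _; rewrite big1 // => i _; rewrite hg1 eq_sym (negbTE z1).
Qed.

End DivisionRing.

Section Refinement.
Variables (m n : nat).
Notation S := ('I_m * 'I_n)%type.
Implicit Types Q : {set {set S}}.

Lemma same_blockE Q x y : is_partition Q -> same_block Q x y = (y \in pblock Q x).
Proof.
move=> partQ; rewrite /same_block eq_pblock ?(cover_partition partQ) ?inE //.
by case/and3P: partQ.
Qed.

Lemma same_block_refines Q' Q x y : is_partition Q' -> is_partition Q ->
  refines Q' Q -> same_block Q' x y -> same_block Q x y.
Proof.
move=> partQ' partQ QQ'; rewrite same_blockE // => yx.
have [|F FQ sub] := QQ' (pblock Q' x).
  by rewrite pblock_mem ?(cover_partition partQ').
have xF : x \in F by apply: (subsetP sub); rewrite mem_pblock (cover_partition partQ').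
have triv : trivIset Q by case/and3P: partQ.
by rewrite /same_block (def_pblock triv FQ xF) (def_pblock triv FQ (subsetP sub _ yx)).
Qed.

Lemma refines_trans Q1 Q2 Q3 : refines Q1 Q2 -> refines Q2 Q3 -> refines Q1 Q3.
Proof.
move=> Q12 Q23 E EQ; have [F FQ sEF] := Q12 E EQ; have [F' F'Q sFF'] := Q23 F FQ.
by exists F'; last exact: subset_trans sFF'.
Qed.

Lemma same_block_inj Q Q' : is_partition Q -> is_partition Q' ->
  same_block Q =2 same_block Q' -> Q = Q'.
Proof.
move=> partQ partQ' eqQ.
rewrite -(equivalence_partition_pblock partQ) -(equivalence_partition_pblock partQ').
congr equivalence_partition; apply: funext => x; apply: funext => y.
by rewrite -!same_blockE.
Qed.

Lemma same_block_preim (T : eqType) (f : S -> T) x y :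
  same_block (preim_partition f [set: S]) x y -> f x = f y.
Proof.
have eqf : {in [set: S] & &, equivalence_rel (fun x y => f x == f y)}.
  by split=> // /eqP ->.
rewrite same_blockE; last exact: preim_partitionP.
move=> yx; apply/eqP.
by rewrite -(pblock_equivalence_partition eqf) ?inE.
Qed.

End Refinement.

Section Realizability.
Local Open Scope ring_scope.
Variables (K : unitRingType) (m n : nat).
Notation S := ('I_m * 'I_n)%type.
Variables (x00 : S) (x00_1 : x00.1 = 0%N :> nat) (x00_2 : x00.2 = 0%N :> nat).

Lemma is00E x : is00 x = (x == x00).
Proof.
case: x x00 x00_1 x00_2 => [i j] [i0 j0] /= i00 j00.
by rewrite /is00 /= xpair_eqE -!val_eqE /= i00 j00.
Qed.

Lemma realizable_conv_one (H : groupType) (a : 'I_m -> H) (b : 'I_n -> H)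
    (r : 'I_m -> K) (s : 'I_n -> K) (Q : {set {set S}}) :
  realizable_with r s Q -> relations_hold Q a b -> conv r a s b =1 @gr_one K H.
Proof.
move=> [partQ sumQ] [a0 [b0 ab]] w.
have triv : trivIset Q by case/and3P: partQ.
pose f (x : S) := (a x.1 * b x.2)%g.
have f00 : f x00 = 1%g by rewrite /f a0 // b0 // mulg1.
have f_block E x y : E \in Q -> x \in E -> y \in E -> f x = f y.
  by move=> EQ xE yE; apply: ab; rewrite /same_block !(def_pblock triv EQ).
have sum_block E : E \in Q -> \sum_(x in E | f x == w) r x.1 * s x.2 =
    if [exists x in E, f x == w] then \sum_(x in E) r x.1 * s x.2 else 0.
  move=> EQ; case: existsP => [[y /andP[yE /eqP fy]]|no_w].
    by apply: eq_bigl => x; case xE: (x \in E); rewrite //= (f_block E x y) // fy eqxx.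
  by apply: big1 => x /andP[xE fx]; case: no_w; exists x; rewrite xE.
rewrite /conv /fibre_sum -big_mkcond /=.
rewrite (eq_bigl (fun x => (x \in [set: S]) && (f x == w))) => [|x]; last by rewrite inE.
rewrite (set_partition_big_cond Q partQ) /=.
set E0 := pblock Q x00.
have E0Q : E0 \in Q by rewrite pblock_mem ?(cover_partition partQ).
have x00E0 : x00 \in E0 by rewrite mem_pblock ?(cover_partition partQ).
rewrite (bigD1 E0) //= [X in _ + X]big1 ?addr0 => [|E /andP[EQ EE0]]; last first.
  rewrite sum_block //; case: ifP => // _; rewrite sumQ //.
  case: existsP => // -[x /andP[xE]]; rewrite is00E => /eqP x_eq.
  by rewrite -(def_pblock triv EQ xE) x_eq eqxx in EE0.
rewrite sum_block // sumQ // /gr_one; case: existsP => [[y /andP[yE /eqP fy]]|no_w].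
  have -> : w = 1%g by rewrite -fy -f00 (f_block E0 y x00).
  rewrite eqxx; case: existsP => // no00; case: no00.
  by exists x00; rewrite x00E0 is00E eqxx.
by case: eqP => // w1; case: no_w; exists x00; rewrite x00E0 w1 f00 eqxx.
Qed.

End Realizability.

Section MinimalRealization.
Local Open Scope ring_scope.
Variables (K : unitRingType) (m n : nat).
Notation S := ('I_m * 'I_n)%type.
Variables (r : 'I_m -> K) (s : 'I_n -> K).

Lemma product_partition_realizable (G : groupType) (g : 'I_m -> G) (h : 'I_n -> G)
    (x00 : S) : x00.1 = 0%N :> nat -> x00.2 = 0%N :> nat ->
  (g x00.1 * h x00.2 = 1)%g -> conv r g s h =1 @gr_one K G ->
  realizable_with r s (preim_partition (fun p : S => g p.1 * h p.2)%g [set: S]).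
Proof.
move=> x00_1 x00_2 f00 conv_one; split=> [|E /imsetP[x _ ->]].
  exact: preim_partitionP.
set f := fun p : S => (g p.1 * h p.2)%g.
transitivity (conv r g s h (f x)).
  rewrite /conv /fibre_sum -big_mkcond; apply: eq_bigl => y.
  by rewrite !inE eq_sym.
rewrite conv_one /gr_one; case: existsP => [[y /andP[yE]]|no00].
  rewrite (is00E x00_1 x00_2) => /eqP y_eq.
  by move: yE; rewrite y_eq !inE /= => /eqP fx; rewrite /f fx f00 eqxx.
case: eqP => // fx1; case: no00; exists x00.
by rewrite !inE /= f00 -fx1 eqxx (is00E x00_1 x00_2) eqxx.
Qed.

Hypotheses (r_neq0 : forall i, r i != 0) (s_neq0 : forall j, s j != 0).

(* The number of pairs in a common block strictly decreases along proper
   refinements, so a realizable refinement minimizing it is minimal. *)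
Lemma realizable_minimal_refinement (P : {set {set S}}) :
  realizable_with r s P ->
  exists Q, [/\ realizable_with r s Q, refines Q P & minimally_realizable K Q].
Proof.
move=> realP.
pose C Q := `[< realizable_with r s Q /\ refines Q P >].
pose N Q := #|[set p : S * S | same_block Q p.1 p.2]|.
have CP : C P by apply/asboolP; split => // E EP; exists E.
case: (arg_minnP N CP) => Q /asboolP[realQ QP] minN.
exists Q; split=> //; exists r, s; split=> //; split=> //; split=> // Q' realQ' Q'Q.
have partQ := realQ.1; have partQ' := realQ'.1.
have sub : [set p : S * S | same_block Q' p.1 p.2] \subset
           [set p : S * S | same_block Q p.1 p.2].
  by apply/subsetP => p; rewrite !inE; apply: same_block_refines.
have CQ' : C Q' by apply/asboolP; split=> //; apply: refines_trans Q'Q QP.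
have /setP eqN : [set p : S * S | same_block Q' p.1 p.2] =
                 [set p : S * S | same_block Q p.1 p.2].
  by apply/eqP; rewrite eqEcard sub minN.
by apply: same_block_inj => // x y; have := eqN (x, y); rewrite !inE.
Qed.

End MinimalRealization.

Section GroupRingConv.
Local Open Scope ring_scope.
Variables (K : unitRingType) (G : groupType).

Lemma directly_finite_conv : group_ring_directly_finite K G ->
  forall (I J : finType) (r : I -> K) (g : I -> G) (s : J -> K) (h : J -> G),
  conv r g s h =1 @gr_one K G -> conv s h r g =1 @gr_one K G.
Proof.
move=> dfin I J r g s h conv_one z.
have gL i : r i != 0 -> g i \in map g (enum I) by rewrite map_f ?mem_enum.
have hL j : s j != 0 -> h j \in map h (enum J) by rewrite map_f ?mem_enum.
rewrite -(gr_mul_fibre_sum r g z hL).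
have supp_g := fibre_sum_supported (g := g) (r := r).
have supp_h := fibre_sum_supported (g := h) (r := s).
apply: (dfin _ _ _ _ supp_g supp_h) => w.
by rewrite (gr_mul_fibre_sum s h w gL).
Qed.

Lemma conv_directly_finite :
  (forall k l (r : 'I_k -> K) (g : 'I_k -> G) (s : 'I_l -> K) (h : 'I_l -> G),
     injective g -> injective h -> (forall i, r i != 0) -> (forall j, s j != 0) ->
     conv r g s h =1 @gr_one K G -> conv s h r g =1 @gr_one K G) ->
  group_ring_directly_finite K G.
Proof.
move=> conv_df f1 f2 L1 L2 f1L1 f2L2 f12 z.
have [k [r [g [inj_g r_neq0 gL1 f1E]]]] := supported_fibre_sumP f1L1.
have [l [s [h [inj_h s_neq0 hL2 f2E]]]] := supported_fibre_sumP f2L2.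
rewrite (eq_gr_mul L2 f2E f1E) (gr_mul_fibre_sum r g z (fun j _ => hL2 j)).
apply: conv_df => // w; rewrite -(gr_mul_fibre_sum s h w (fun i _ => gL1 i)).
by rewrite -(eq_gr_mul L1 f1E f2E).
Qed.

End GroupRingConv.

Section ULIEReduction.
Local Open Scope ring_scope.
Variable K : unitRingType.

Lemma gamma_ULIE m n (Q : {set {set 'I_m * 'I_n}}) (H : groupType)
    (a : 'I_m -> H) (b : 'I_n -> H) :
  (2 <= m)%N -> (2 <= n)%N -> minimally_realizable K Q ->
  relations_hold Q a b -> injective a -> injective b -> ULIE_group K (gamma Q).
Proof.
move=> m2 n2 minQ relQ inj_a inj_b.
have partQ : is_partition Q by case: minQ => [r [s [_ [_ [[]]]]]].
have [[phi [_ [phi_a phi_b]]] _] := (gamma_presents Q).2 H a b relQ.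
exists m, n, Q, (gamma_a Q), (gamma_b Q).
do 3!split=> //; split; first exact: gamma_presents.
split; last split=> //.
- by move=> i i' /(congr1 phi); rewrite !phi_a => /inj_a.
- by move=> j j' /(congr1 phi); rewrite !phi_b => /inj_b.
Qed.

Hypothesis ULIE_dfin :
  forall Gamma : groupType, ULIE_group K Gamma -> group_ring_directly_finite K Gamma.

Lemma conv_one_comm_normalized (G : groupType) k l (r : 'I_k -> K) (g : 'I_k -> G)
    (s : 'I_l -> K) (h : 'I_l -> G) (i0 : 'I_k) (j0 : 'I_l) :
  (2 <= k)%N -> (2 <= l)%N -> i0 = 0%N :> nat -> j0 = 0%N :> nat ->
  (g i0 * h j0 = 1)%g -> injective g -> injective h ->
  (forall i, r i != 0) -> (forall j, s j != 0) ->
  conv r g s h =1 @gr_one K G -> conv s h r g =1 @gr_one K G.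
Proof.
move=> k2 l2 i00 j00 gh1 inj_g inj_h r_neq0 s_neq0 conv_one.
have realP := product_partition_realizable (x00 := (i0, j0)) i00 j00 gh1 conv_one.
have [Q [realQ QP minQ]] := realizable_minimal_refinement r_neq0 s_neq0 realP.
pose a i := (h j0 * g i)%g; pose b j := (h j * g i0)%g.
have hg1 : (h j0 * g i0 = 1)%g by rewrite -(mulg1_eq gh1) mulVg.
have relQ : relations_hold Q a b.
  split; [move=> i i_0 | split; [move=> j j_0 | move=> x y xy]].
  - by rewrite /a (_ : i = i0) //; apply: val_inj; rewrite /= i_0 i00.
  - by rewrite /b (_ : j = j0) //; apply: val_inj; rewrite /= j_0 j00.
  - have /= gh_xy := same_block_preim (same_block_refines realQ.1 realP.1 QP xy).
    by rewrite /a /b !mulgA -(mulgA (h j0)) gh_xy !mulgA.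
have inj_a : injective a by move=> i i' /mulgI /inj_g.
have inj_b : injective b by move=> j j' /mulIg /inj_h.
have [[phi [hom_phi [phi_a phi_b]]] _] := (gamma_presents Q).2 G a b relQ.
have dfin := ULIE_dfin (gamma_ULIE k2 l2 minQ relQ inj_a inj_b).
have conv_gamma :=
  realizable_conv_one (x00 := (i0, j0)) i00 j00 realQ (gamma_presents Q).1.
have := fibre_sum_hom_one (group_hom1 hom_phi) (directly_finite_conv dfin conv_gamma).
move=> conv_G z; rewrite -conv_G; apply: eq_bigr => p _ /=.
by rewrite hom_phi phi_a phi_b /a /b -mulgA (mulgA (g i0)) gh1 mul1g.
Qed.

End ULIEReduction.

Lemma conv_one_comm (K : unitRingType) (divK : is_divring K)
    (ULIE_dfin : forall Gamma : groupType, ULIE_group K Gamma ->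
       group_ring_directly_finite K Gamma)
    (G : groupType) k l (r : 'I_k -> K) (g : 'I_k -> G) (s : 'I_l -> K)
    (h : 'I_l -> G) :
  injective g -> injective h -> (forall i, r i != 0%R) -> (forall j, s j != 0%R) ->
  conv r g s h =1 @gr_one K G -> conv s h r g =1 @gr_one K G.
Proof.
move=> inj_g inj_h r_neq0 s_neq0 conv_one.
have /existsP[[i1 j1] /= /eqP gh1] : [exists p : 'I_k * 'I_l, g p.1 * h p.2 == 1]%g.
  apply: contraT => /existsPn no1; have := conv_one 1%g.
  rewrite /gr_one eqxx /conv /fibre_sum big1 => [/eqP|p _].
    by rewrite eq_sym oner_eq0.
  by rewrite (negbTE (no1 p)).
have unique_product := conv_one_unique_product divK r_neq0 s_neq0 conv_one.
have small_ord n (le_n1 : (n <= 1)%N) (i i' : 'I_n) : i = i'.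
  have val0 (o : 'I_n) : val o = 0%N.
    by apply/eqP; rewrite -leqn0 -ltnS (leq_trans (ltn_ord o)).
  by apply: val_inj; rewrite !val0.
case: (leqP k 1) => [k1|k2].
  apply: (conv_one_trivial_products divK conv_one) => i j; apply: unique_product.
  by move=> [i' j'] /=; rewrite (small_ord _ k1 i' i) => /mulgI /inj_h ->.
case: (leqP l 1) => [l1|l2].
  apply: (conv_one_trivial_products divK conv_one) => i j; apply: unique_product.
  by move=> [i' j'] /=; rewrite (small_ord _ l1 j' j) => /mulIg /inj_g ->.
pose i0 : 'I_k := Ordinal (ltnW k2); pose j0 : 'I_l := Ordinal (ltnW l2).
pose si := tperm i0 i1; pose ta := tperm j0 j1.
move=> z; rewrite -(conv_perm s h r g ta si z).
apply: (conv_one_comm_normalized ULIE_dfin (i0 := i0) (j0 := j0)) => //.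
- by rewrite /= !tpermL.
- exact: inj_comp inj_g (@perm_inj _ si).
- exact: inj_comp inj_h (@perm_inj _ ta).
- by move=> i; apply: r_neq0.
- by move=> j; apply: s_neq0.
- by move=> w; rewrite (conv_perm r g s h si ta w).
Qed.

Theorem corollary4p15 (K : unitRingType) (hK : is_divring K) :
  (forall G : groupType, group_ring_directly_finite K G) <->
  (forall Gamma : groupType, ULIE_group K Gamma ->
     group_ring_directly_finite K Gamma).
Proof.
split=> [dfin Gamma _ | ULIE_dfin G]; first exact: dfin.
apply: conv_directly_finite => k l r g s h.
exact: conv_one_comm.
Qed.
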